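(* A finite sequence $i_1i_2\dots i_n$ of symbols from $\{1,2,\dots,N\}$ is stable if and only if it can be reduced to the empty sequence by a finite number of operations of the following types: (a) transposing two adjacent blocks of consecutive terms, each block consisting of two symbols (i.e. replacing $\dots ab\,cd\dots$ by $\dots cd\,ab\dots$); (b) deleting a block of two consecutive identical symbols.
   Context: A sequence $i_1i_2\dots i_n$ of symbols is stable if its terms can be partitioned into disjoint pairs of identical symbols, with one term of each pair at an odd position and the other at an even position; equivalently, $n$ is even and the formal alternating sum $i_1-i_2+\dots+i_{n-1}-i_n$ vanishes as a formal sum of symbols. *)

From mathcomp Require Import all_boot.
Set Implicit Arguments. Unset Strict Implicit. Unset Printing Implicit Defensive.

(* Sequences of symbols are [seq nat]; positions are 0-based indices
   0 .. size s - 1 (parity of i + j is unaffected by the shift to 1-based). *)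

Definition stable (s : seq nat) : Prop :=
  exists P : seq (nat * nat),
    perm_eq (flatten [seq [:: p.1; p.2] | p <- P]) (iota 0 (size s)) /\
    all (fun p => (nth 0 s p.1 == nth 0 s p.2) && odd (p.1 + p.2)) P.

Inductive step : seq nat -> seq nat -> Prop :=
  | step_swap (u v : seq nat) (a b c d : nat) :
      step (u ++ [:: a; b; c; d] ++ v) (u ++ [:: c; d; a; b] ++ v)
  | step_del (u v : seq nat) (a : nat) :
      step (u ++ [:: a; a] ++ v) (u ++ v).

Inductive reduces_to_nil : seq nat -> Prop :=
  | rtn_nil : reduces_to_nil [::]
  | rtn_step (s t : seq nat) : step s t -> reduces_to_nil t -> reduces_to_nil s.

From mathcomp Require Import all_boot.
From mathcomp Require Import zify.
Set Implicit Arguments. Unset Strict Implicit.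

(* Reading a matching of a stable sequence pair by pair shows that the symbols
   at its even positions are a permutation of those at its odd positions; call
   such a sequence balanced.  Both operations keep a sequence balanced.  A
   balanced sequence [a b t] with [b != a] has another [b] at an even position
   of [t]; sliding the block that starts there to the left by swaps of pairs
   puts it next to [b], and [b b] is deleted.  Hence balanced sequences reduce
   to the empty one.  Conversely, undoing an operation on a stable sequence
   yields a stable sequence, by transporting the matching along the
   corresponding reindexing of positions. *)

Section EvensOdds.

Variable T : eqType.
Implicit Types s u v w : seq T.

Fixpoint evens s : seq T :=
  if s is x :: s' then x :: odds s' else [::]
with odds s : seq T :=
  if s is _ :: s' then evens s' else [::].

Lemma evens_odds_cat u v :
  evens (u ++ v) = evens u ++ (if odd (size u) then odds v else evens v) /\
  odds (u ++ v) = odds u ++ (if odd (size u) then evens v else odds v).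
Proof. by elim: u => [|x u [IHe IHo]] //=; rewrite IHe IHo; case: odd. Qed.

Lemma evens_cat u v :
  evens (u ++ v) = evens u ++ (if odd (size u) then odds v else evens v).
Proof. exact: (evens_odds_cat u v).1. Qed.

Lemma odds_cat u v :
  odds (u ++ v) = odds u ++ (if odd (size u) then evens v else odds v).
Proof. exact: (evens_odds_cat u v).2. Qed.

Lemma size_evens s : size (evens s) = size (odds s) + odd (size s).
Proof. by elim: s => //= x s ->; case: odd => /=; lia. Qed.

Lemma evens_odds_filter x0 s :
  evens s = [seq nth x0 s i | i <- iota 0 (size s) & ~~ odd i] /\
  odds s = [seq nth x0 s i | i <- iota 0 (size s) & odd i].
Proof.
elim: s => [|x s [IHe IHo]] //=.
rewrite -(addn0 1) iotaDl !filter_map -!map_comp IHe IHo; split.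
- by congr (_ :: map _ _); apply: eq_filter => i /=; rewrite negbK.
- by congr map; apply: eq_filter.
Qed.

Lemma mem_evens_split b s :
  b \in evens s -> exists u w, s = u ++ b :: w /\ ~~ odd (size u).
Proof.
suff [] : (b \in evens s -> exists u w, s = u ++ b :: w /\ ~~ odd (size u)) /\
          (b \in odds s -> exists u w, s = u ++ b :: w /\ odd (size u)) by [].
elim: s => [|x s [IHe IHo]] //=; split.
- rewrite inE => /orP [/eqP -> | /IHo [u [w [-> Hu]]]]; first by exists [::], s.
  by exists (x :: u), w; rewrite /= Hu.
- by move=> /IHe [u [w [-> Hu]]]; exists (x :: u), w; rewrite /= Hu.
Qed.

End EvensOdds.

Definition balanced (s : seq nat) := perm_eq (evens s) (odds s).

Lemma balanced_size_even s : balanced s -> ~~ odd (size s).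
Proof. by move=> /perm_size; rewrite size_evens; case: odd => //=; lia. Qed.

Lemma step_balanced s t : step s t -> balanced s <-> balanced t.
Proof.
case=> [u v a b c d | u v a]; rewrite /balanced !evens_cat !odds_cat;
  case: (odd (size u)) => /=; split => /permP E; apply/permP => p;
  move: (E p); rewrite !count_cat /=; lia.
Qed.

Inductive steps : seq nat -> seq nat -> Prop :=
  | steps_refl s : steps s s
  | steps_cons s t r : step s t -> steps t r -> steps s r.

Lemma steps_trans s t r : steps s t -> steps t r -> steps s r.
Proof. by elim=> // s1 t1 r1 st _ IH /IH; apply: steps_cons. Qed.

Lemma steps_reduces_to_nil s t : steps s t -> reduces_to_nil t -> reduces_to_nil s.
Proof. by elim=> // s1 t1 r1 st _ IH /IH; apply: rtn_step. Qed.

Lemma steps_balanced s t : steps s t -> balanced s -> balanced t.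
Proof. by elim=> // s1 t1 r1 /step_balanced [st _] _ IH /st. Qed.

Lemma steps_move_pair u w x y v : ~~ odd (size w) ->
  steps (u ++ w ++ [:: x; y] ++ v) (u ++ [:: x; y] ++ w ++ v).
Proof.
move=> w_even; have [m] : exists m, size w = m.*2.
  by exists (size w)./2; rewrite -[LHS]odd_double_half (negbTE w_even).
clear w_even; elim: m u w => [|m IH] u [|c [|d w]] //=.
  by move=> _; apply: steps_refl.
move=> [w_size].
have := IH (u ++ [:: c; d]) w w_size; rewrite -!catA /= => moved.
apply: (steps_trans moved); apply: steps_cons (steps_refl _).
exact: (step_swap u (w ++ v) c d x y).
Qed.

Lemma balanced_shrink s : balanced s -> s != [::] ->
  exists2 t, steps s t & size t < size s.
Proof.
case: s => [|a [|b t]] // s_bal _; first by have := balanced_size_even s_bal.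
have [-> | b_neq_a] := eqVneq b a.
  by exists t; [apply: steps_cons (steps_refl _); apply: (step_del [::])|].
have : b \in evens t.
  by move: (perm_mem s_bal b); rewrite /= !inE eqxx (negbTE b_neq_a) /= => ->.
case/mem_evens_split=> w [[|y v] [t_eq w_even]]; subst t.
  by move: (balanced_size_even s_bal); rewrite /= size_cat /= addn1 /= w_even.
exists (a :: y :: w ++ v); last by rewrite /= !size_cat /=; lia.
apply: (steps_trans (steps_move_pair [:: a; b] b y v w_even)).
by apply: steps_cons (steps_refl _); apply: (step_del [:: a]).
Qed.

Lemma balanced_reduces_to_nil s : balanced s -> reduces_to_nil s.
Proof.
elim: {s}(size s).+1 {-2}s (ltnSn (size s)) => // n IH [|a s] s_size s_bal.
  exact: rtn_nil.
have [t st t_size] := balanced_shrink s_bal isT.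
apply: steps_reduces_to_nil st (IH _ _ (steps_balanced st s_bal)).
exact: leq_trans t_size s_size.
Qed.

Definition pair_positions (P : seq (nat * nat)) : seq nat :=
  flatten [seq [:: p.1; p.2] | p <- P].

Lemma filter_pair_positions (P : seq (nat * nat)) :
  all (fun p => odd (p.1 + p.2)) P ->
  filter (fun i => ~~ odd i) (pair_positions P)
    = [seq if odd p.1 then p.2 else p.1 | p <- P] /\
  filter odd (pair_positions P) = [seq if odd p.1 then p.1 else p.2 | p <- P].
Proof.
elim: P => [|[i j] P IH] //= /andP [ij_odd /IH [-> ->]].
by move: ij_odd; rewrite oddD; case: (odd i); case: (odd j).
Qed.

Lemma stable_balanced s : stable s -> balanced s.
Proof.
move=> [P [P_perm P_ok]].
have P_odd : all (fun p => odd (p.1 + p.2)) P.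
  by apply/allP => p /(allP P_ok) /andP [].
have [P_evens P_odds] := filter_pair_positions P_odd.
have [s_evens s_odds] := evens_odds_filter 0 s.
rewrite -perm_sym in P_perm.
rewrite /balanced s_evens s_odds.
rewrite (permPl (perm_map _ (perm_filter _ P_perm))) P_evens perm_sym.
rewrite (permPl (perm_map _ (perm_filter _ P_perm))) P_odds -!map_comp.
apply/permP => x; rewrite !count_map; apply: eq_in_count => p.
by move=> /(allP P_ok) /andP [/eqP eq_p _] /=; case: (odd p.1); rewrite eq_p.
Qed.

(* [Q] matches the positions of [s] missed by the embedding [f] of the
   positions of [t]. *)
Lemma stable_reindex s t (f : nat -> nat) (Q : seq (nat * nat)) :
  perm_eq (pair_positions Q ++ map f (iota 0 (size t))) (iota 0 (size s)) ->
  all (fun p => (nth 0 s p.1 == nth 0 s p.2) && odd (p.1 + p.2)) Q ->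
  (forall i, i < size t -> nth 0 s (f i) = nth 0 t i /\ odd (f i) = odd i) ->
  stable t -> stable s.
Proof.
move=> Q_perm Q_ok f_ok [P [P_perm P_ok]].
exists (Q ++ [seq (f p.1, f p.2) | p <- P]); split.
  rewrite map_cat flatten_cat; apply: perm_trans Q_perm; rewrite perm_cat2l.
  have -> : flatten [seq [:: p.1; p.2] | p <- [seq (f p.1, f p.2) | p <- P]]
      = map f (pair_positions P).
    by elim: (P) => //= p P' ->.
  exact: perm_map.
rewrite all_cat Q_ok; apply/allP => _ /mapP [p pP ->] /=.
have in_t i : i \in [:: p.1; p.2] -> i < size t.
  move=> ip; suff : i \in iota 0 (size t) by rewrite mem_iota.
  by rewrite -(perm_mem P_perm); apply/flattenP; exists [:: p.1; p.2]; rewrite ?map_f.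
have [s1 o1] := f_ok _ (in_t _ (mem_head _ _)).
have [s2 o2] := f_ok _ (in_t p.2 (mem_last p.1 [:: p.2])).
move/allP: P_ok => /(_ p pP) /andP [/eqP eq_p odd_p].
by rewrite s1 s2 eq_p eqxx oddD o1 o2 -oddD.
Qed.

Lemma iota_shift_after k n (f : nat -> nat) :
  [seq if i < k then i else f i | i <- iota 0 k ++ iota k n]
    = iota 0 k ++ [seq f i | i <- iota k n].
Proof.
rewrite map_cat; congr (_ ++ _); first rewrite -[RHS]map_id.
all: apply/eq_in_map => i; rewrite mem_iota.
  by rewrite add0n => /andP [_ ->].
by move=> /andP [ki _]; rewrite ltnNge ki.
Qed.

Lemma stable_insert_pair u v a : stable (u ++ v) -> stable (u ++ [:: a; a] ++ v).
Proof.
set k := size u.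
apply: (@stable_reindex _ _ (fun i => if i < k then i else i.+2) [:: (k, k.+1)]).
- rewrite !size_cat /= iotaD add0n iotaD add0n /= iota_shift_after.
  rewrite add0n -[k.+2]add2n iotaDl.
  by rewrite -[[:: k, _ & _]]/([:: k; k.+1] ++ _) perm_catCA perm_refl.
- rewrite /= !nth_cat ltnn subnn ltnNge leqnSn subSn // subnn /= eqxx.
  by rewrite addnS addnn /= odd_double.
- move=> i _; rewrite !nth_cat /=; case: (ltnP i k) => [-> // | ki].
  rewrite ltnNge (leq_trans ki (leqW (leqnSn _))) -addn2 -addnBAC //.
  by rewrite ltnNge leq_addl addnK addn2 /= negbK.
Qed.

Definition swap_pairs_index (j : nat) : nat :=
  match j with 0 => 2 | 1 => 3 | 2 => 0 | 3 => 1 | _ => j end.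

Lemma perm_iota_swap_pairs k n : 4 <= n ->
  perm_eq [seq k + swap_pairs_index (i - k) | i <- iota k n] (iota k n).
Proof.
case: n => [|[|[|[|n]]]] // _.
rewrite -[k in iota k]addn0 iotaDl -map_comp.
rewrite (@eq_map _ _ _ (addn k \o swap_pairs_index)); last by move=> i /=; rewrite addKn.
rewrite map_comp perm_map //=.
have -> : map swap_pairs_index (iota 4 n) = iota 4 n.
  rewrite -[RHS]map_id; apply/eq_in_map => i.
  by rewrite mem_iota => /andP [i4 _]; case: i i4 => [|[|[|[|i]]]].
by rewrite -[[:: 2, 3, 0, 1 & _]]/([:: 2; 3] ++ [:: 0; 1] ++ _) perm_catCA.
Qed.

Lemma stable_swap_pairs u v a b c d :
  stable (u ++ [:: c; d; a; b] ++ v) -> stable (u ++ [:: a; b; c; d] ++ v).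
Proof.
set k := size u.
apply: (@stable_reindex _ _
  (fun i => if i < k then i else k + swap_pairs_index (i - k)) [::]).
- rewrite cat0s !size_cat iotaD add0n iota_shift_after /k perm_cat2l.
  exact: perm_iota_swap_pairs (leq_addr _ _).
- by [].
- move=> i _; case: (ltnP i k) => [ik | ki]; first by rewrite !nth_cat ik.
  rewrite -(subnKC ki); move: (i - k) => j.
  rewrite addKn !nth_cat !ltnNge !leq_addr /= !addKn oddD [odd (k + j)]oddD.
  by case: j => [|[|[|[|j]]]].
Qed.

Lemma step_stable s t : step s t -> stable t -> stable s.
Proof. by case=> *; [apply: stable_swap_pairs | apply: stable_insert_pair]. Qed.

Lemma reduces_to_nil_stable s : reduces_to_nil s -> stable s.
Proof. by elim=> [|s1 t1 st _]; [exists [::] | apply: step_stable]. Qed.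

Theorem lemma3p2 (N : nat) (s : seq nat) :
  all (fun x => (1 <= x <= N)%N) s ->
  (stable s <-> reduces_to_nil s).
Proof.
move=> _; split; last exact: reduces_to_nil_stable.
by move=> /stable_balanced; apply: balanced_reduces_to_nil.
Qed.
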